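(* For $n\in\mathbb{N}$, a triangular automorphism of index $n$ is the automorphism $T_n$ of $E$ with $T_n(e_j)=e_j$ for $j\ne n$ and $T_n(e_n)=-e_n+2P_n$, where $P_n\in E(e_1,\ldots,e_n)\cap E_{(1)}$. Fix $N\in\mathbb{N}$ and triangular automorphisms $T_1,\ldots,T_N$ (of indices $1,\ldots,N$) such that $P_j\in E(e_1,\ldots,e_N)\cap E_{(1)}$ for $j=1,\ldots,N$, and let $\tau_N=\langle T_1,\ldots,T_N\rangle\le\mathrm{Aut}(E)$. Then: (1) $\tau_N$ is abelian; (2) $\tau_N$ has order $2^N$; (3) every $\varphi\in\tau_N$ satisfies $\varphi^2=\mathrm{id}$, hence induces a $\mathbb{Z}_2$-grading $E_\varphi$ on $E$; (4) if $\varphi=T_{j_1}\circ\cdots\circ T_{j_s}$ with $j_1,\ldots,j_s$ pairwise distinct, then $E_\varphi$ is $\mathbb{Z}_2$-isomorphic to $E_{s^\ast}$.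
   Context: $F$ is a field of characteristic zero, $L$ an infinite-dimensional $F$-vector space with basis $e_1,e_2,\ldots$, $E$ its Grassmann algebra. $E_{(1)}$ is the span of the monomials $e_{i_1}\cdots e_{i_m}$ ($i_1<\cdots<i_m$) of odd length $m$. For $k\in\mathbb{N}$, $E(e_1,\ldots,e_k)$ is the span of all monomials having no factor among $e_1,\ldots,e_k$. $E_\varphi$ is the $\mathbb{Z}_2$-grading by the eigenspaces of $\varphi$ for $1$ (degree 0) and $-1$ (degree 1). $E_{s^\ast}$ is the grading in which $e_1,\ldots,e_s$ have degree $1$ and all other $e_i$ degree $0$. $\mathbb{Z}_2$-isomorphic means isomorphic via an algebra isomorphism preserving the degree components. *)

From HB Require Import structures.
From mathcomp Require Import all_boot all_order all_algebra.
From mathcomp Require Import finmap.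
From mathcomp.multinomials Require Import monalg.

Set Implicit Arguments.
Unset Strict Implicit.
Unset Printing Implicit Defensive.

Import GRing.Theory.
Local Open Scope fset_scope.
Local Open Scope ring_scope.

(* Monomials of the Grassmann algebra: a finite set A of naturals; the
   (0-based) index a in A stands for the paper's generator e_(a+1), and the
   monomial A stands for the increasing product of its generators. *)
Definition mon := {fset nat}.

Definition Grass (F : fieldType) := {malg F[mon]}.

(* number of transpositions needed to reorder e_A e_B increasingly *)
Definition inv_count (A B : mon) : nat :=
  \sum_(a <- A) \sum_(b <- B) (b < a)%N.

Section Grassmann.
Variable F : fieldType.
Local Notation E := (Grass F).

Definition Emul (x y : E) : E :=
  \sum_(A <- msupp x) \sum_(B <- msupp y)
     (if A `&` B == fset0 then
        (x@_A * y@_B * (-1) ^+ inv_count A B) *: << A `|` B >>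
      else 0).

Definition Eone : E := << fset0 >>.

(* the paper's generator e_k, for k >= 1 *)
Definition egen (k : nat) : E := << [fset k.-1] >>.

Definition Eodd (x : E) : Prop := forall A, A \in msupp x -> odd #|` A|.

(* E(e_1,...,e_k): span of monomials with no factor among e_1,...,e_k *)
Definition Eavoid (k : nat) (x : E) : Prop :=
  forall A, A \in msupp x -> forall a, a \in A -> (k <= a)%N.

Definition alg_aut (f : E -> E) : Prop :=
  [/\ forall (a : F) (x y : E), f (a *: x + y) = a *: f x + f y,
      forall x y, f (Emul x y) = Emul (f x) (f y),
      f Eone = Eone &
      bijective f].

(* a Z2-grading of E given by its two components D false (degree 0)
   and D true (degree 1) *)
Definition Z2grading (D : bool -> E -> Prop) : Prop :=
  [/\ forall b, D b 0 /\ (forall (a : F) x y, D b x -> D b y -> D b (a *: x + y)),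
      forall x, exists x0 x1, [/\ D false x0, D true x1 & x = x0 + x1],
      forall x, D false x -> D true x -> x = 0 &
      forall b c x y, D b x -> D c y -> D (addb b c) (Emul x y)].

Definition grading_of (phi : E -> E) (b : bool) (x : E) : Prop :=
  if b then phi x = - x else phi x = x.

(* E_{s*}: e_1,...,e_s have degree 1, all other e_i degree 0 *)
Definition grading_star (s : nat) (b : bool) (x : E) : Prop :=
  forall A, A \in msupp x -> odd #|` [fset a in A | (a < s)%N]| = b.

Definition Z2iso (D D' : bool -> E -> Prop) : Prop :=
  exists psi : E -> E, alg_aut psi /\ forall b x, D b x <-> D' b (psi x).

Inductive in_gen (T : nat -> E -> E) (N : nat) : (E -> E) -> Prop :=
| gen_id : in_gen T N id
| gen_l j f : (0 < j <= N)%N -> in_gen T N f -> in_gen T N (T j \o f)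
| gen_inv j g f : (0 < j <= N)%N -> cancel (T j) g -> cancel g (T j) ->
    in_gen T N f -> in_gen T N (g \o f).

End Grassmann.

From HB Require Import structures.
From mathcomp Require Import all_boot all_order all_algebra.
From mathcomp Require Import finmap.
From mathcomp.multinomials Require Import monalg.
From mathcomp Require Import ring.

(* Every element of tau_N is an algebra automorphism, hence determined by its
   values on the generators, and sends each e_i either to itself or, for
   i <= N, to -e_i + 2 P_i.  The P_j only involve generators beyond e_N, so
   they are fixed by all these maps: composing two of them adds the sets of
   indices i with e_i not fixed modulo 2.  This gives (1), (3) and a bijection
   of tau_N with the subsets of {1, ..., N}, i.e. (2).  For (4), let pi be a
   permutation of {1, ..., N} moving j_1, ..., j_s to 1, ..., s.  Odd elements
   anticommute and square to zero, so e_j |-> e_(pi j) + P_j (j among the j_k),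
   e_i |-> e_(pi i) (otherwise) extends to an automorphism psi of E, with
   inverse e_(pi j) |-> e_j - P_j.  It conjugates phi into the automorphism
   negating e_1, ..., e_s, whose eigenspaces are the components of E_{s*}. *)

Set Implicit Arguments.
Unset Strict Implicit.
Unset Printing Implicit Defensive.

Import GRing.Theory.
Local Open Scope fset_scope.
Local Open Scope ring_scope.

(* The generator e_(a+1) of the paper, i.e. [egen F a.+1]. *)
Local Notation "''e[' a ]" := (<< [fset a%N] >> : Grass _) (at level 0, format "''e[' a ]").

(** * Linear maps on the monomial basis *)

Section LinearMaps.
Variable F : fieldType.
Local Notation E := (Grass F).

Section Laws.
Variable f : E -> E.
Hypothesis f_lin : linear f.

Lemma lin0 : f 0 = 0.
Proof.
have := f_lin 1 0 0; rewrite scale1r addr0 scale1r => f00.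
by apply: (addIr (f 0)); rewrite add0r -f00.
Qed.

Lemma linD x y : f (x + y) = f x + f y.
Proof. by rewrite -[x]scale1r f_lin !scale1r. Qed.

Lemma linZ a x : f (a *: x) = a *: f x.
Proof. by rewrite -[a *: x]addr0 f_lin lin0 addr0. Qed.

Lemma linN x : f (- x) = - f x.
Proof. by rewrite -scaleN1r linZ scaleN1r. Qed.

Lemma linB x y : f (x - y) = f x - f y.
Proof. by rewrite linD linN. Qed.

Lemma lin_sum (I : Type) (r : seq I) (g : I -> E) :
  f (\sum_(i <- r) g i) = \sum_(i <- r) f (g i).
Proof.
elim: r => [|i r IHr]; first by rewrite !big_nil lin0.
by rewrite !big_cons linD IHr.
Qed.

End Laws.

Lemma linear_comp (f g : E -> E) : linear f -> linear g -> linear (f \o g).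
Proof. by move=> f_lin g_lin a x y /=; rewrite g_lin f_lin. Qed.

Definition linext (f : mon -> E) (x : E) : E := \sum_(A <- msupp x) x@_A *: f A.

Lemma linextEw (f : mon -> E) (x : E) (K : {fset mon}) : msupp x `<=` K ->
  linext f x = \sum_(A <- K) x@_A *: f A.
Proof.
move=> suppK; rewrite /linext (big_fset_incl _ suppK) // => A _ /mcoeff_outdom ->.
by rewrite scale0r.
Qed.

Lemma linext_linear (f : mon -> E) : linear (linext f).
Proof.
move=> a x y; set K := msupp x `|` msupp y.
have suppK : msupp (a *: x + y) `<=` K.
  apply: fsubset_trans (msuppD_le _ _) _; apply: fsetUSS => //.
  exact: msuppZ_le.
rewrite (linextEw _ (fsubsetUl _ _ : msupp x `<=` K)).
rewrite (linextEw _ (fsubsetUr _ _ : msupp y `<=` K)) (linextEw _ suppK).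
rewrite scaler_sumr -big_split /=; apply: eq_bigr => A _.
by rewrite mcoeffD mcoeffZ scalerDl scalerA.
Qed.

Lemma eq_linext (f g : mon -> E) : f =1 g -> linext f =1 linext g.
Proof. by move=> fg x; apply: eq_bigr => A _; rewrite fg. Qed.

Lemma linext_combination (a : F) (f g : mon -> E) x :
  linext (fun A => a *: f A + g A) x = a *: linext f x + linext g x.
Proof.
rewrite /linext scaler_sumr -big_split /=; apply: eq_bigr => A _.
by rewrite scalerDr !scalerA mulrC.
Qed.

Lemma msupp_mon A : msupp (<< A >> : E) = [fset A].
Proof. by rewrite msuppU oner_eq0. Qed.

Lemma linext_mon (f : mon -> E) A : linext f << A >> = f A.
Proof. by rewrite /linext msupp_mon big_seq_fset1 mcoeffUU scale1r. Qed.

Lemma monalgUZ (c : F) A : << c *g A >> = c *: (<< A >> : E).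
Proof.
by apply/malgP => B; rewrite mcoeffZ !mcoeffU; case: eqP; rewrite ?mulr1 ?mulr0.
Qed.

Lemma linear_linextE (f : E -> E) : linear f -> f =1 linext (fun A => f << A >>).
Proof.
move=> f_lin x; rewrite {1}(monalgE x) (lin_sum f_lin); apply: eq_bigr => A _.
by rewrite monalgUZ linZ.
Qed.

Lemma eq_linear_mon (f g : E -> E) : linear f -> linear g ->
  (forall A, f << A >> = g << A >>) -> f =1 g.
Proof.
move=> f_lin g_lin fg x.
by rewrite (linear_linextE f_lin) (linear_linextE g_lin); apply: eq_linext.
Qed.

Lemma mcoeff_linext_diag (c : mon -> F) (x : E) B :
  (linext (fun A => c A *: << A >>) x)@_B = c B * x@_B.
Proof.
rewrite raddf_sum /=.
under eq_bigr => A _ do rewrite !mcoeffZ mcoeffU mulr_natr mulrnAr.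
have [xB | xB] := boolP (B \in msupp x); last first.
  rewrite (mcoeff_outdom xB) mulr0 big1_fset // => A xA _.
  by case: eqP => [eAB | _]; rewrite ?mulr0n // -eAB xA in xB.
rewrite (big_fsetD1 B) //= eqxx mulr1n mulrC big1_fset ?addr0 // => A.
by rewrite !inE => /andP[/negbTE ->].
Qed.

End LinearMaps.

(** * The Grassmann product *)

Section Product.
Variable F : fieldType.
Local Notation E := (Grass F).
Local Notation Eone := (Eone F).

Definition mon_mul (A B : mon) : E :=
  if A `&` B == fset0 then (-1) ^+ inv_count A B *: << A `|` B >> else 0.

Lemma EmulE (x y : E) : Emul x y = linext (fun A => linext (mon_mul A) y) x.
Proof.
apply: eq_bigr => A _; rewrite /linext scaler_sumr; apply: eq_bigr => B _.
rewrite /mon_mul; case: (A `&` B == fset0); last by rewrite !scaler0.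
by rewrite !scalerA.
Qed.

Lemma Emul_linearl (z : E) : linear (fun x : E => Emul x z).
Proof. by move=> a x y; rewrite !EmulE linext_linear. Qed.

Lemma Emul_linearr (z : E) : linear (Emul z).
Proof.
move=> a x y; rewrite !EmulE -linext_combination; apply: eq_linext => A.
exact: linext_linear.
Qed.

Lemma Emul_mon A B : Emul << A >> << B >> = mon_mul A B.
Proof. by rewrite EmulE !linext_mon. Qed.

Lemma Emul0l (z : E) : Emul 0 z = 0.
Proof. exact: lin0 (Emul_linearl z). Qed.

Lemma Emul0r (z : E) : Emul z 0 = 0.
Proof. exact: lin0 (Emul_linearr z). Qed.

Lemma EmulNl (x z : E) : Emul (- x) z = - Emul x z.
Proof. exact: (linN (Emul_linearl z) x). Qed.

Lemma EmulNr (x z : E) : Emul z (- x) = - Emul z x.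
Proof. exact: (linN (Emul_linearr z) x). Qed.

Lemma EmulZl a (x z : E) : Emul (a *: x) z = a *: Emul x z.
Proof. exact: (linZ (Emul_linearl z) a x). Qed.

Lemma EmulZr a (x z : E) : Emul z (a *: x) = a *: Emul z x.
Proof. exact: (linZ (Emul_linearr z) a x). Qed.

Lemma Emul1l : left_id Eone (@Emul F).
Proof.
apply: eq_linear_mon (Emul_linearr _) _ _ => // B.
by rewrite Emul_mon /mon_mul fset0I eqxx fset0U /inv_count big_seq_fset0 scale1r.
Qed.

Lemma Emul1r : right_id Eone (@Emul F).
Proof.
apply: eq_linear_mon (Emul_linearl _) _ _ => // A.
rewrite Emul_mon /mon_mul fsetI0 eqxx fsetU0 /inv_count big1 ?scale1r // => a _.
by rewrite big_seq_fset0.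
Qed.

Lemma disjoint_memN (A B : mon) a : A `&` B == fset0 -> a \in A -> a \notin B.
Proof.
move=> /eqP AB aA; apply/negP => aB.
have : a \in A `&` B by rewrite inE aA aB.
by rewrite AB inE.
Qed.

Lemma big_fsetU_disjoint (G : nat -> nat) (A B : mon) : A `&` B == fset0 ->
  (\sum_(a <- A `|` B) G a = \sum_(a <- A) G a + \sum_(a <- B) G a)%N.
Proof.
move=> AB; rewrite (big_fsetID _ (mem A)) /=; congr (_ + _)%N.
  by apply: eq_fbigl => a; rewrite !inE; case: (a \in A); rewrite ?andbT ?andbF.
apply: eq_fbigl => a; rewrite !inE; case aB: (a \in B); case aA: (a \in A) => //=.
by rewrite (negbTE (disjoint_memN AB aA)) in aB.
Qed.

Lemma inv_countUl A B C : A `&` B == fset0 ->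
  inv_count (A `|` B) C = (inv_count A C + inv_count B C)%N.
Proof. exact: big_fsetU_disjoint. Qed.

Lemma inv_countUr A B C : B `&` C == fset0 ->
  inv_count A (B `|` C) = (inv_count A B + inv_count A C)%N.
Proof.
by move=> BC; rewrite /inv_count -big_split; apply: eq_bigr => a _; rewrite big_fsetU_disjoint.
Qed.

Lemma inv_count_sym A B : A `&` B == fset0 ->
  (inv_count A B + inv_count B A)%N = (#|` A| * #|` B|)%N.
Proof.
move=> AB; rewrite /inv_count [X in (_ + X)%N]exchange_big -big_split /=.
rewrite card_fset_sum1 big_distrl big_seq [RHS]big_seq; apply: eq_bigr => a aA.
rewrite -big_split card_fset_sum1 big_distrr /= big_seq [RHS]big_seq /=.
apply: eq_bigr => b bB; have : a != b by apply: contraTneq bB => <-; apply: disjoint_memN AB aA.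
by case: ltngtP.
Qed.

Lemma Emul_monA A B C :
  Emul (Emul << A >> << B >>) << C >> = Emul << A >> (Emul << B >> << C >>) :> E.
Proof.
rewrite !Emul_mon /mon_mul.
case AB: (A `&` B == fset0); case BC: (B `&` C == fset0) => /=.
- rewrite EmulZl EmulZr !Emul_mon /mon_mul fsetIUl fsetIUr !fsetU_eq0 AB BC andbT /=.
  case: (A `&` C == fset0) => /=; last by rewrite !scaler0.
  rewrite !scalerA (inv_countUl _ AB) (inv_countUr _ BC) fsetUA !exprD.
  by congr (_ *: _); ring.
- by rewrite Emul0r EmulZl Emul_mon /mon_mul fsetIUl fsetU_eq0 BC andbF /= scaler0.
- by rewrite Emul0l EmulZr Emul_mon /mon_mul fsetIUr fsetU_eq0 AB /= scaler0.
- by rewrite Emul0l Emul0r.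
Qed.

Lemma EmulA : associative (@Emul F).
Proof.
have monAB A B : Emul (Emul << A >> << B >>) =1 Emul << A >> \o Emul (<< B >> : E).
  apply: eq_linear_mon (Emul_linearr _) (linear_comp (Emul_linearr _) (Emul_linearr _)) _.
  exact: Emul_monA.
have monA A (z : E) : (fun y => Emul (Emul << A >> y) z) =1 (fun y => Emul << A >> (Emul y z)).
  apply: eq_linear_mon (linear_comp (Emul_linearl z) (Emul_linearr _))
    (linear_comp (Emul_linearr _) (Emul_linearl z)) _ => B.
  exact: monAB.
move=> x y z; move: x.
apply: (@eq_linear_mon F (fun x => Emul x (Emul y z)) (fun x => Emul (Emul x y) z)).
- exact: Emul_linearl.
- exact: linear_comp (Emul_linearl z) (Emul_linearl y).
- by move=> A; rewrite monA.
Qed.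

End Product.

Section OddElements.
Variable F : fieldType.
Local Notation E := (Grass F).

Lemma Eodd0 : Eodd (0 : E).
Proof. by move=> A; rewrite msupp0 inE. Qed.

Lemma EoddD (x y : E) : Eodd x -> Eodd y -> Eodd (x + y).
Proof.
move=> ox oy A /(fsubsetP (msuppD_le _ _)); rewrite inE => /orP[]; [exact: ox | exact: oy].
Qed.

Lemma EoddN (x : E) : Eodd x -> Eodd (- x).
Proof. by move=> ox A; rewrite msuppN; apply: ox. Qed.

Lemma Eodd_gen a : Eodd ('e[a] : E).
Proof. by move=> A; rewrite msupp_mon inE => /eqP ->; rewrite cardfs1. Qed.

Lemma inv_count_odd_sym A B : A `&` B == fset0 -> odd #|` A| -> odd #|` B| ->
  ((-1) ^+ inv_count A B : F) = - (-1) ^+ inv_count B A.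
Proof.
move=> AB oddA oddB; have := congr1 odd (inv_count_sym AB).
rewrite oddD oddM oddA oddB /= => /addbP odd_sum.
by rewrite -signr_odd -[in RHS]signr_odd -odd_sum; case: (odd _); rewrite /= ?opprK.
Qed.

Lemma EmulC_odd (x y : E) : Eodd x -> Eodd y -> Emul x y = - Emul y x.
Proof.
move=> ox oy; rewrite /Emul [in RHS]exchange_big -sumrN big_seq [RHS]big_seq.
apply: eq_bigr => A xA; rewrite -sumrN big_seq [RHS]big_seq; apply: eq_bigr => B yB.
rewrite (fsetIC B A) (fsetUC B A); case AB: (A `&` B == fset0); last by rewrite oppr0.
rewrite -scaleNr (inv_count_odd_sym AB (ox _ xA) (oy _ yB)); congr (_ *: _).
by ring.
Qed.

Lemma Emul_odd_sq (x : E) : (2%:R : F) != 0 -> Eodd x -> Emul x x = 0.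
Proof.
move=> two_nz ox.
have : (2%:R : F) *: Emul x x = 0 by rewrite scaler_nat mulr2n {1}(EmulC_odd ox ox) addNr.
by move/eqP; rewrite scaler_eq0 (negbTE two_nz) => /eqP.
Qed.

End OddElements.

(** * Algebra endomorphisms and substitutions *)

Lemma mon_ind (Pr : mon -> Prop) : Pr fset0 ->
  (forall c (A : mon), (forall a, a \in A -> (c < a)%N) -> Pr A -> Pr (c |` A)) ->
  forall A, Pr A.
Proof.
move=> Pr0 PrS A; have [n] := ubnP #|` A|; elim: n A => // n IHn A.
have [-> _ // | /fset0Pn exA] := eqVneq A fset0.
case: (ex_minnP exA) => c cA c_min; rewrite ltnS (cardfsD1 c) cA add1n => cardA.
rewrite -(fsetD1K cA); apply: PrS; last exact: IHn.
by move=> a; rewrite !inE => /andP[ac /c_min]; rewrite leq_eqVlt eq_sym (negbTE ac).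
Qed.

Section AlgebraHomomorphisms.
Variable F : fieldType.
Local Notation E := (Grass F).
Local Notation Eone := (Eone F).

Lemma mon_cons c (A : mon) : (forall a, a \in A -> (c < a)%N) ->
  << c |` A >> = Emul 'e[c] (<< A >> : E).
Proof.
move=> c_min; rewrite Emul_mon /mon_mul.
have -> : [fset c] `&` A == fset0.
  apply/eqP/fsetP => a; rewrite !inE; apply/negbTE/negP => /andP[/eqP -> /c_min].
  by rewrite ltnn.
rewrite /inv_count big_seq_fset1 big_seq big1 ?scale1r // => a /c_min /ltnW.
by rewrite leqNgt => /negbTE ->.
Qed.

Definition alg_hom (f : E -> E) :=
  [/\ linear f, {morph f : x y / Emul x y} & f Eone = Eone].

Lemma alg_aut_hom f : alg_aut f -> alg_hom f.
Proof. by case. Qed.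

Lemma alg_hom_id : alg_hom id.
Proof. by []. Qed.

Lemma alg_hom_comp f g : alg_hom f -> alg_hom g -> alg_hom (f \o g).
Proof.
case=> f_lin fM f1 [g_lin gM g1]; split => /=; first exact: linear_comp.
  by move=> x y /=; rewrite gM fM.
by rewrite g1 f1.
Qed.

Lemma alg_hom_eq_mon f g (A : mon) : alg_hom f -> alg_hom g ->
  (forall a, a \in A -> f 'e[a] = g 'e[a]) -> f << A >> = g << A >>.
Proof.
move=> [_ fM f1] [_ gM g1]; elim/mon_ind: A => [_|c A c_min IHA fg].
  by rewrite -[<< _ >>]/Eone f1 g1.
have fgA a : a \in A -> f 'e[a] = g 'e[a] by move=> aA; apply/fg/fset1Ur.
by rewrite (mon_cons c_min) fM gM (fg c (fset1U1 c A)) (IHA fgA).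
Qed.

Lemma alg_hom_eq_gen f g : alg_hom f -> alg_hom g ->
  (forall a, f 'e[a] = g 'e[a]) -> f =1 g.
Proof.
move=> fH gH fg; have [f_lin _ _] := fH; have [g_lin _ _] := gH.
by apply: eq_linear_mon => // A; apply: alg_hom_eq_mon.
Qed.

Lemma alg_hom_fix_avoid f k x : alg_hom f ->
  (forall b, (k <= b)%N -> f 'e[b] = 'e[b]) -> Eavoid k x -> f x = x.
Proof.
move=> fH f_fix x_avoid; have [f_lin _ _] := fH.
rewrite (linear_linextE f_lin x) [RHS](linear_linextE (f := id) (fun _ _ _ => erefl) x).
rewrite /linext big_seq [RHS]big_seq; apply: eq_bigr => A xA; congr (_ *: _).
apply: (alg_hom_eq_mon fH alg_hom_id) => a aA.
exact/f_fix/(x_avoid A xA a aA).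
Qed.

Lemma alg_aut_id : alg_aut (@id E).
Proof. by split => //; exists id. Qed.

Lemma alg_aut_comp (f g : E -> E) : alg_aut f -> alg_aut g -> alg_aut (f \o g).
Proof.
move=> fA gA; have [f_lin _ _ f_bij] := fA; have [g_lin _ _ g_bij] := gA.
have [_ fM f1] := alg_aut_hom fA; have [_ gM g1] := alg_aut_hom gA.
by split; [exact: linear_comp | move=> x y /=; rewrite gM fM | rewrite /= g1 f1 |
  exact: bij_comp].
Qed.

Lemma eq_alg_aut (f g : E -> E) : f =1 g -> alg_aut g -> alg_aut f.
Proof.
move=> fg gA; have [g_lin _ _ g_bij] := gA; have [_ gM g1] := alg_aut_hom gA.
split; [by move=> a x y; rewrite !fg g_lin | by move=> x y; rewrite !fg gM | by rewrite fg |].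
exact: (eq_bij g_bij (fun x => esym (fg x))).
Qed.

End AlgebraHomomorphisms.

Section Substitution.
Variable F : fieldType.
Hypothesis two_nz : (2%:R : F) != 0.
Local Notation E := (Grass F).
Local Notation Eone := (Eone F).
Variable u : nat -> E.
Hypothesis u_odd : forall a, Eodd (u a).

Definition subst_mon (A : mon) : E := foldr (fun a y => Emul (u a) y) Eone (sort leq A).

Definition subst (x : E) : E := linext subst_mon x.

Lemma subst_mon_cons c (A : mon) : (forall a, a \in A -> (c < a)%N) ->
  subst_mon (c |` A) = Emul (u c) (subst_mon A).
Proof.
move=> c_min; rewrite /subst_mon.
suff -> : sort leq (c |` A) = c :: sort leq A by [].
apply: (sorted_eq leq_trans anti_leq).
- by apply: sort_sorted; exact: leq_total.
- rewrite /= path_sortedE; last exact: leq_trans.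
  rewrite sort_sorted ?andbT; last exact: leq_total.
  by apply/allP => a; rewrite mem_sort => /c_min /ltnW.
- have cA : c \notin A by apply/negP => /c_min; rewrite ltnn.
  rewrite perm_sort; apply: uniq_perm; first exact: fset_uniq.
    by rewrite /= mem_sort cA sort_uniq fset_uniq.
  by move=> a; rewrite in_cons mem_sort !inE.
Qed.

Lemma subst_linear : linear subst.
Proof. exact: linext_linear. Qed.

Lemma subst_monE A : subst << A >> = subst_mon A.
Proof. exact: linext_mon. Qed.

Lemma subst1 : subst Eone = Eone.
Proof. exact: subst_monE. Qed.

Lemma subst_gen a : subst 'e[a] = u a.
Proof. by rewrite -[[fset a]]fsetU0 subst_monE subst_mon_cons // Emul1r. Qed.

Lemma Emul_subst_mon_mem a C : a \in C -> Emul (u a) (subst_mon C) = 0.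
Proof.
elim/mon_ind: C => [|c C c_min IHC]; first by rewrite inE.
rewrite subst_mon_cons // EmulA => /fset1UP[-> | aC].
  by rewrite Emul_odd_sq // Emul0l.
by rewrite (EmulC_odd (@u_odd a) (@u_odd c)) EmulNl -EmulA IHC // Emul0r oppr0.
Qed.

(* Moving [u a] in front of the [u c] with [c < a] costs one sign for each of
   them, which is the sign in [mon_mul [fset a] C]. *)
Lemma subst_mon_insert a C : a \notin C ->
  subst_mon (a |` C) = (-1) ^+ inv_count [fset a] C *: Emul (u a) (subst_mon C).
Proof.
rewrite /inv_count big_seq_fset1.
elim/mon_ind: C => [_|c C c_min IHC]; first by rewrite big_seq_fset0 scale1r subst_mon_cons.
rewrite in_fset1U negb_or => /andP[ac aC]; have [a_lt_c | c_lt_a] := ltnP a c.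
  have a_min b : b \in c |` C -> (a < b)%N.
    by case/fset1UP => [-> // | /c_min]; apply: ltn_trans.
  rewrite subst_mon_cons // big1_fset ?scale1r // => b /a_min /ltnW.
  by rewrite leqNgt => /negbTE ->.
have {c_lt_a}c_lt_a : (c < a)%N by rewrite ltn_neqAle eq_sym ac.
have c_min' b : b \in a |` C -> (c < b)%N by case/fset1UP => [-> // | /c_min].
rewrite fsetUCA (subst_mon_cons c_min') (IHC aC) EmulZr EmulA.
rewrite (EmulC_odd (@u_odd c) (@u_odd a)) EmulNl -EmulA -(subst_mon_cons c_min).
rewrite big_fsetU1; last by apply/negP => /c_min; rewrite ltnn.
by rewrite c_lt_a /= exprS mulN1r scaleNr scalerN.
Qed.

Lemma subst_Emul_gen a (z : E) : subst (Emul 'e[a] z) = Emul (u a) (subst z).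
Proof.
move: z; apply: eq_linear_mon.
- exact: linear_comp subst_linear (Emul_linearr _).
- exact: linear_comp (Emul_linearr _) subst_linear.
move=> C /=; rewrite Emul_mon /mon_mul subst_monE.
case aC: ([fset a] `&` C == fset0); last first.
  move/negbT/fset0Pn: aC => [b]; rewrite !inE => /andP[/eqP-> bC].
  by rewrite (lin0 subst_linear) Emul_subst_mon_mem.
have aC' : a \notin C by apply: disjoint_memN aC (fset11 a).
rewrite (linZ subst_linear) subst_monE subst_mon_insert // scalerA -expr2 -exprM.
by rewrite mulnC exprM sqrrN expr1n expr1n scale1r.
Qed.

Lemma subst_Emul : {morph subst : x y / Emul x y}.
Proof.
have monL (A : mon) y : subst (Emul << A >> y) = Emul (subst << A >>) (subst y).
  elim/mon_ind: A y => [|c A c_min IHA] y; first by rewrite Emul1l subst_monE Emul1l.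
  rewrite (mon_cons _ c_min) -[in LHS]EmulA [in LHS]subst_Emul_gen.
  by rewrite [in RHS]subst_Emul_gen [in LHS]IHA EmulA.
move=> x y; move: x.
apply: (@eq_linear_mon F (fun x => subst (Emul x y)) (fun x => Emul (subst x) (subst y))).
- exact: linear_comp subst_linear (Emul_linearl _).
- exact: linear_comp (Emul_linearl _) subst_linear.
- by move=> A; apply: monL.
Qed.

Lemma subst_alg_hom : alg_hom subst.
Proof. split; [exact: subst_linear | exact: subst_Emul | exact: subst1]. Qed.

End Substitution.

Section SubstitutionAutomorphisms.
Variable F : fieldType.
Local Notation E := (Grass F).

Lemma subst_alg_aut (u v : nat -> E) : (2%:R : F) != 0 ->
  (forall a, Eodd (u a)) -> (forall a, Eodd (v a)) ->
  (forall a, subst u (v a) = 'e[a]) -> (forall a, subst v (u a) = 'e[a]) ->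
  alg_aut (subst u).
Proof.
move=> two_nz u_odd v_odd uv vu.
have uH := subst_alg_hom two_nz u_odd; have vH := subst_alg_hom two_nz v_odd.
have [u_lin uM u1] := uH; split=> //; exists (subst v) => x.
  by apply: (alg_hom_eq_gen (alg_hom_comp vH uH) (alg_hom_id F)) => a /=; rewrite subst_gen.
by apply: (alg_hom_eq_gen (alg_hom_comp uH vH) (alg_hom_id F)) => a /=; rewrite subst_gen.
Qed.

End SubstitutionAutomorphisms.

(** * Gradings by involutions *)

Lemma cardfs_sep (A : mon) (P : pred nat) :
  #|` [fset a in A | P a]| = (\sum_(a <- A) P a)%N.
Proof.
rewrite card_fset_sum1 -big_fset_condE big_mkcond.
by apply: eq_bigr => a _; case: (P a).
Qed.

Section Gradings.
Variable F : fieldType.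
Hypothesis two_nz : (2%:R : F) != 0.
Local Notation E := (Grass F).

Lemma grading_of_involution (phi : E -> E) : alg_hom phi -> involutive phi ->
  Z2grading (grading_of phi).
Proof.
move=> [phi_lin phiM _] phiK; split.
- move=> b; split; first by case: b; rewrite /grading_of (lin0 phi_lin) ?oppr0.
  by case: b => a x y; rewrite /grading_of phi_lin => -> ->; rewrite ?scalerN ?opprD.
- move=> x; exists (2%:R^-1 *: (x + phi x)), (2%:R^-1 *: (x - phi x)); split.
  + by rewrite /grading_of (linZ phi_lin) (linD phi_lin) phiK addrC.
  + by rewrite /grading_of (linZ phi_lin) (linB phi_lin) phiK -scalerN opprB.
  + rewrite -scalerDr addrACA subrr addr0 -mulr2n -scaler_nat scalerA.
    by rewrite mulVf // scale1r.
- move=> x; rewrite /grading_of => x_even x_odd.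
  have : (2%:R : F) *: x = 0 by rewrite scaler_nat mulr2n -{1}x_even x_odd addNr.
  by move/eqP; rewrite scaler_eq0 (negbTE two_nz) => /eqP.
- move=> b c x y; rewrite /grading_of phiM.
  by case: b => ->; case: c => ->; rewrite /= ?EmulNl ?EmulNr ?opprK.
Qed.

Lemma Z2iso_conj (psi phi D : E -> E) : alg_aut psi ->
  (forall x, psi (phi x) = D (psi x)) -> Z2iso (grading_of phi) (grading_of D).
Proof.
move=> psi_aut conj; exists psi; split => // b x.
have [psi_lin _ _ /bij_inj psi_inj] := psi_aut.
rewrite /grading_of -conj; case: b; last by split => [-> | /psi_inj].
by rewrite -(linN psi_lin); split => [-> | /psi_inj].
Qed.

Lemma signr_eq (b c : bool) : ((-1) ^+ b == (-1) ^+ c :> F) = (b == c).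
Proof.
have N1_neq1 : (-1 : F) != 1 by rewrite eq_sym -addr_eq0.
by case: b; case: c; rewrite ?expr1 ?expr0 ?eqxx //= ?(negbTE N1_neq1) // eq_sym (negbTE N1_neq1).
Qed.

Definition sign_mon (s : nat) (A : mon) : F := (-1) ^+ #|` [fset a in A | (a < s)%N]|.

Definition sign_aut (s : nat) : E -> E := subst (fun a => if (a < s)%N then - 'e[a] else 'e[a]).

Lemma sign_aut_alg_hom s : alg_hom (sign_aut s).
Proof.
apply: subst_alg_hom => // a.
by case: (a < s)%N; [apply: EoddN |]; apply: Eodd_gen.
Qed.

Lemma sign_aut_gen s a : sign_aut s 'e[a] = if (a < s)%N then - 'e[a] else 'e[a].
Proof. exact: subst_gen. Qed.

Lemma sign_mon_cons s c A : c \notin A ->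
  sign_mon s (c |` A) = (if (c < s)%N then -1 else 1) * sign_mon s A.
Proof.
by move=> cA; rewrite /sign_mon !cardfs_sep big_fsetU1 // exprD; case: (c < s)%N; rewrite ?expr1.
Qed.

Lemma sign_aut_mon s A : sign_aut s << A >> = sign_mon s A *: << A >>.
Proof.
have [_ signM sign1] := sign_aut_alg_hom s.
elim/mon_ind: A => [|c A c_min IHA].
  by rewrite -[<< _ >>]/(Eone F) sign1 /sign_mon cardfs_sep big_seq_fset0 scale1r.
have cA : c \notin A by apply/negP => /c_min; rewrite ltnn.
rewrite (mon_cons _ c_min) signM IHA sign_aut_gen EmulZr (sign_mon_cons _ cA) -scalerA.
by case: (c < s)%N; rewrite ?EmulNl ?scaleN1r ?scale1r ?scalerN.
Qed.

Lemma grading_of_sign s b (x : E) : grading_of (sign_aut s) b x <-> grading_star s b x.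
Proof.
have [sign_lin _ _] := sign_aut_alg_hom s.
have signE A : (sign_aut s x)@_A = (-1) ^+ odd #|` [fset a in A | (a < s)%N]| * x@_A.
  rewrite (linear_linextE sign_lin) (eq_linext (sign_aut_mon s)) mcoeff_linext_diag.
  by rewrite /sign_mon signr_odd.
suff -> : grading_of (sign_aut s) b x = (sign_aut s x = (-1) ^+ b *: x).
  split => [xb A xA | xb]; last first.
    apply/malgP => A; rewrite signE mcoeffZ.
    have [xA | xA] := boolP (A \in msupp x); last by rewrite (mcoeff_outdom xA) !mulr0.
    by rewrite (xb A xA).
  have x_nz : x@_A != 0 by rewrite mcoeff_neq0.
  have := congr1 (mcoeff A) xb; rewrite signE mcoeffZ => /(mulIf x_nz)/eqP.
  by rewrite signr_eq => /eqP.
by rewrite /grading_of; case: b; rewrite ?scaleN1r ?scale1r.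
Qed.

End Gradings.

(** * Triangular automorphisms *)

Section TriangularAutomorphisms.
Variable F : fieldType.
Local Notation E := (Grass F).
Variables (N : nat) (P : nat -> E).
Hypothesis P_avoid : forall j, (0 < j <= N)%N -> Eavoid N (P j).

Definition tri_image (b : nat -> bool) a : E :=
  if (a < N)%N && b a.+1 then - 'e[a] + 2%:R *: P a.+1 else 'e[a].

(* [tri_aut b g]: g acts on the generators as the composite of the T_j with
   [b j], for j in 1..N. *)
Definition tri_aut (b : nat -> bool) (g : E -> E) :=
  alg_aut g /\ forall a, g 'e[a] = tri_image b a.

Lemma tri_aut_hom b g : tri_aut b g -> alg_hom g.
Proof. by case=> /alg_aut_hom. Qed.

Lemma tri_aut_fixP b g j : tri_aut b g -> (0 < j <= N)%N -> g (P j) = P j.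
Proof.
move=> gT /P_avoid; apply: alg_hom_fix_avoid (tri_aut_hom gT) _ => a Na.
by case: gT => _ ->; rewrite /tri_image ltnNge Na.
Qed.

Lemma tri_aut_id : tri_aut (fun=> false) id.
Proof. by split; [exact: alg_aut_id | move=> a; rewrite /tri_image andbF]. Qed.

Lemma eq_tri_aut b c f g : tri_aut b g -> b =1 c -> f =1 g -> tri_aut c f.
Proof.
move=> [gA gE] bc fg; split=> [|a]; first exact: eq_alg_aut gA.
by rewrite fg gE /tri_image bc.
Qed.

Lemma tri_aut_comp b c g h : tri_aut b g -> tri_aut c h ->
  tri_aut (fun j => b j (+) c j) (g \o h).
Proof.
move=> gT [hA hE]; have [gA gE] := gT; have [g_lin _ _] := tri_aut_hom gT.
split=> [|a /=]; first exact: alg_aut_comp.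
rewrite hE /tri_image; case: (ltnP a N) => [aN | Na] /=; last by rewrite gE /tri_image ltnNge Na.
case: (c a.+1); last by rewrite addbF gE /tri_image aN.
rewrite (linD g_lin) (linN g_lin) (linZ g_lin) (tri_aut_fixP gT) ?aN // gE /tri_image aN.
by case: (b a.+1); rewrite /= ?opprD ?opprK ?addrNK.
Qed.

Lemma tri_aut_eq b c g h : tri_aut b g -> tri_aut c h ->
  (forall j, (0 < j <= N)%N -> b j = c j) -> g =1 h.
Proof.
move=> gT hT bc; apply: alg_hom_eq_gen (tri_aut_hom gT) (tri_aut_hom hT) _ => a.
case: gT => _ ->; case: hT => _ ->; rewrite /tri_image.
by case: ltnP => //= aN; rewrite bc.
Qed.

Lemma tri_aut_involutive b g : tri_aut b g -> involutive g.
Proof.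
move=> gT x; apply: (tri_aut_eq (tri_aut_comp gT gT) tri_aut_id) => j _.
exact: addbb.
Qed.

Lemma tri_image_inj b c a : (2%:R : F) != 0 -> (a < N)%N ->
  tri_image b a = tri_image c a -> b a.+1 = c a.+1.
Proof.
move=> two_nz aN; have Pa : (0 < a.+1 <= N)%N by [].
suff neq : - 'e[a] + 2%:R *: P a.+1 != 'e[a].
  rewrite /tri_image aN /=; case: (b _); case: (c _) => // /eqP.
    by rewrite (negbTE neq).
  by rewrite eq_sym (negbTE neq).
have Pa_a : [fset a] \notin msupp (P a.+1).
  by apply/negP => /(P_avoid Pa) /(_ a (fset11 a)); rewrite leqNgt aN.
apply/eqP => /(congr1 (mcoeff [fset a])) /eqP.
rewrite mcoeffD mcoeffN mcoeffZ !mcoeffUU (mcoeff_outdom Pa_a) mulr0 addr0.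
by rewrite -subr_eq0 -opprD oppr_eq0 (negbTE two_nz).
Qed.

End TriangularAutomorphisms.

Notation prodT T js := (foldr (fun j f => T j \o f) id js).

Section TriangularGroup.
Variable F : fieldType.
Local Notation E := (Grass F).
Variables (N : nat) (T : nat -> E -> E) (P : nat -> E).
Hypothesis T_aut : forall j, (0 < j <= N)%N -> alg_aut (T j).
Hypothesis T_fix : forall j i, (0 < j <= N)%N -> (0 < i)%N -> i != j ->
  T j (egen F i) = egen F i.
Hypothesis T_gen : forall j, (0 < j <= N)%N -> T j (egen F j) = - egen F j + 2%:R *: P j.
Hypothesis P_avoid : forall j, (0 < j <= N)%N -> Eavoid N (P j).

Local Notation tri_aut := (tri_aut N P).

Lemma tri_aut_T j : (0 < j <= N)%N -> tri_aut (fun i => i == j) (T j).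
Proof.
move=> Tj; split=> [|a]; first exact: T_aut.
rewrite /tri_image /=; have [ej | ja] := eqVneq a.+1 j; last first.
  by rewrite andbF; exact: (T_fix Tj (ltn0Sn a) ja).
by move: Tj; rewrite -ej andbT => /= aN; rewrite aN; exact: T_gen.
Qed.

Lemma in_gen_tri_aut f : in_gen T N f -> exists b, tri_aut b f.
Proof.
have T_step j f' b : (0 < j <= N)%N -> tri_aut b f' ->
    tri_aut (fun i => (i == j) (+) b i) (T j \o f').
  by move=> Tj f'T; exact: (tri_aut_comp P_avoid (tri_aut_T Tj) f'T).
elim=> [|j f' Tj _ [b f'T] | j g f' Tj _ gT _ [b f'T]].
- by exists (fun=> false); apply: tri_aut_id.
- by exists (fun i => (i == j) (+) b i); apply: T_step.
- exists (fun i => (i == j) (+) b i); apply: eq_tri_aut (T_step _ _ _ Tj f'T) _ _ => // x /=.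
  by rewrite -{1}(tri_aut_involutive P_avoid (tri_aut_T Tj) (g (f' x))) gT.
Qed.

Lemma in_gen_comm f g : in_gen T N f -> in_gen T N g -> f \o g =1 g \o f.
Proof.
move=> /in_gen_tri_aut[b fT] /in_gen_tri_aut[c gT].
apply: (tri_aut_eq (tri_aut_comp P_avoid fT gT) (tri_aut_comp P_avoid gT fT)) => j _.
exact: addbC.
Qed.

Lemma in_gen_alg_hom f : in_gen T N f -> alg_hom f.
Proof. by case/in_gen_tri_aut => b /tri_aut_hom. Qed.

Lemma in_gen_involutive f : in_gen T N f -> involutive f.
Proof. by case/in_gen_tri_aut => b /(tri_aut_involutive P_avoid). Qed.

Lemma in_gen_prodT js : all (fun j => 0 < j <= N)%N js -> in_gen T N (prodT T js).
Proof.
elim: js => [_ | j js IHjs /andP[Tj /IHjs]]; [exact: gen_id | exact: gen_l].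
Qed.

Lemma tri_aut_prodT js : uniq js -> all (fun j => 0 < j <= N)%N js ->
  tri_aut (fun i => i \in js) (prodT T js).
Proof.
elim: js => [_ _ | j js IHjs /andP[jn js_uniq] /andP[Tj js_in]].
  by apply: (eq_tri_aut (tri_aut_id N P)) => i.
apply: eq_tri_aut (tri_aut_comp P_avoid (tri_aut_T Tj) (IHjs js_uniq js_in)) _ _ => // i.
by rewrite in_cons /=; case: eqP => // ->; rewrite (negbTE jn).
Qed.

Definition support_seq (v : {ffun 'I_N -> bool}) : seq nat :=
  [seq (val k).+1 | k <- enum 'I_N & v k].

Lemma succ_ord_inj : injective (fun k : 'I_N => (val k).+1).
Proof. by move=> k k' /succn_inj/val_inj. Qed.

Lemma support_seq_uniq v : uniq (support_seq v).
Proof. by rewrite (map_inj_uniq succ_ord_inj); exact/filter_uniq/enum_uniq. Qed.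

Lemma support_seq_range v : all (fun j => 0 < j <= N)%N (support_seq v).
Proof. by apply/allP => _ /mapP[k _ ->] /=; rewrite ltn_ord. Qed.

Lemma mem_support_seq v (k : 'I_N) : ((val k).+1 \in support_seq v) = v k.
Proof. by rewrite (mem_map succ_ord_inj) mem_filter mem_enum andbT. Qed.

Lemma in_gen_card : (2%:R : F) != 0 ->
  exists h : 'I_(2 ^ N) -> (E -> E),
    (forall i, in_gen T N (h i)) /\
    (forall i k, h i =1 h k -> i = k) /\
    (forall f, in_gen T N f -> exists i, f =1 h i).
Proof.
move=> two_nz.
have card_supp : #|{: {ffun 'I_N -> bool}}| = (2 ^ N)%N.
  by rewrite card_ffun card_bool card_ord.
pose supp (i : 'I_(2 ^ N)) := enum_val (cast_ord (esym card_supp) i).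
have prodT_tri v := tri_aut_prodT (support_seq_uniq v) (support_seq_range v).
exists (fun i => prodT T (support_seq (supp i))); split; last split.
- by move=> i; apply/in_gen_prodT/support_seq_range.
- move=> i k hik; apply: (@cast_ord_inj _ _ (esym card_supp)); apply: enum_val_inj.
  apply/ffunP => m.
  rewrite -!mem_support_seq; apply: (tri_image_inj P_avoid two_nz (ltn_ord m)).
  by case: (prodT_tri (supp i)) => _ <-; case: (prodT_tri (supp k)) => _ <-.
- move=> f /in_gen_tri_aut[b fT].
  pose v := [ffun k : 'I_N => b (val k).+1].
  exists (cast_ord card_supp (enum_rank v)).
  rewrite /supp cast_ordK enum_rankK.
  apply: (tri_aut_eq fT (prodT_tri v)) => j /andP[j_gt0 jN].
  have jm : (j.-1 < N)%N by rewrite prednK.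
  by rewrite -(prednK j_gt0) -[j.-1]/(val (Ordinal jm)) mem_support_seq ffunE.
Qed.

End TriangularGroup.

(** * Conjugation to the grading E_{s*} *)

Section Relabel.
Variables (N : nat) (S : seq nat).
Hypothesis S_uniq : uniq S.
Hypothesis S_lt : forall a, a \in S -> (a < N)%N.

(* A permutation of the indices below N moving S onto 0, ..., size S - 1. *)
Definition relabel_seq : seq nat := S ++ [seq a <- iota 0 N | a \notin S].

Definition relabel (a : nat) : nat := if (a < N)%N then index a relabel_seq else a.

Definition unrelabel (b : nat) : nat := if (b < N)%N then nth 0%N relabel_seq b else b.

Lemma relabel_seq_uniq : uniq relabel_seq.
Proof.
rewrite cat_uniq S_uniq filter_uniq ?iota_uniq // andbT.
by apply/hasPn => a; rewrite mem_filter => /andP[].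
Qed.

Lemma mem_relabel_seq a : (a \in relabel_seq) = (a < N)%N.
Proof.
rewrite mem_cat mem_filter mem_iota add0n /=.
by case: (boolP (a \in S)) => [/S_lt | _] //=; rewrite orbT.
Qed.

Lemma size_relabel_seq : size relabel_seq = N.
Proof.
rewrite -(size_iota 0 N); apply: perm_size; apply: uniq_perm.
- exact: relabel_seq_uniq.
- exact: iota_uniq.
- by move=> a; rewrite mem_relabel_seq mem_iota.
Qed.

Lemma size_relabel_le : (size S <= N)%N.
Proof. by rewrite -size_relabel_seq size_cat leq_addr. Qed.

Lemma relabelK : cancel relabel unrelabel.
Proof.
move=> a; rewrite /relabel /unrelabel; case: (ltnP a N) => [aN | Na]; last by rewrite ltnNge Na.
have aS : a \in relabel_seq by rewrite mem_relabel_seq.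
by rewrite -{1}size_relabel_seq index_mem aS nth_index.
Qed.

Lemma unrelabelK : cancel unrelabel relabel.
Proof.
move=> b; rewrite /relabel /unrelabel; case: (ltnP b N) => [bN | Nb]; last by rewrite ltnNge Nb.
have bN' : (b < size relabel_seq)%N by rewrite size_relabel_seq.
by rewrite -mem_relabel_seq mem_nth // index_uniq // relabel_seq_uniq.
Qed.

Lemma relabel_ge a : (N <= a)%N -> relabel a = a.
Proof. by rewrite /relabel ltnNge => ->. Qed.

Lemma relabel_mem a : a \in S -> (relabel a < size S)%N.
Proof. by move=> aS; rewrite /relabel S_lt // index_cat aS index_mem. Qed.

Lemma relabel_notin a : a \notin S -> (size S <= relabel a)%N.
Proof.
move=> aS; rewrite /relabel; case: ltnP => [_ | Na]; last exact: leq_trans size_relabel_le Na.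
by rewrite index_cat (negbTE aS) leq_addr.
Qed.

End Relabel.

Section Conjugation.
Variable F : fieldType.
Hypothesis two_nz : (2%:R : F) != 0.
Local Notation E := (Grass F).
Variables (N : nat) (T : nat -> E -> E) (P : nat -> E).
Hypothesis T_aut : forall j, (0 < j <= N)%N -> alg_aut (T j).
Hypothesis T_fix : forall j i, (0 < j <= N)%N -> (0 < i)%N -> i != j ->
  T j (egen F i) = egen F i.
Hypothesis T_gen : forall j, (0 < j <= N)%N -> T j (egen F j) = - egen F j + 2%:R *: P j.
Hypothesis P_avoid : forall j, (0 < j <= N)%N -> Eavoid N (P j).
Hypothesis P_odd : forall j, (0 < j <= N)%N -> Eodd (P j).
Variable js : seq nat.
Hypothesis js_uniq : uniq js.
Hypothesis js_range : all (fun j => 0 < j <= N)%N js.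

Local Notation s := (size js).
Local Notation S := [seq j.-1 | j <- js].
Local Notation pi := (relabel N S).
Local Notation pi_inv := (unrelabel N S).

Lemma mem_js_range j : j \in js -> (0 < j <= N)%N.
Proof. exact: (allP js_range). Qed.

Lemma mem_pred_js a : (a \in S) = (a.+1 \in js).
Proof.
apply/mapP/idP => [[j jS ->] | ajs]; last by exists a.+1.
by rewrite prednK //; case/andP: (mem_js_range jS).
Qed.

Lemma pred_js_uniq : uniq S.
Proof.
rewrite map_inj_in_uniq // => i j /mem_js_range/andP[i_gt0 _] /mem_js_range/andP[j_gt0 _] eq_ij.
by rewrite -(prednK i_gt0) -(prednK j_gt0) eq_ij.
Qed.

Lemma pred_js_lt a : a \in S -> (a < N)%N.
Proof. by rewrite mem_pred_js => /mem_js_range. Qed.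

Lemma relabel_js_lt a : a.+1 \in js -> (pi a < s)%N.
Proof. by rewrite -mem_pred_js => /(relabel_mem pred_js_lt); rewrite size_map. Qed.

Lemma relabel_js_ge a : a.+1 \notin js -> (s <= pi a)%N.
Proof. by rewrite -mem_pred_js => /(relabel_notin pred_js_uniq pred_js_lt); rewrite size_map. Qed.

Definition Pjs a : E := if a.+1 \in js then P a.+1 else 0.

Lemma Pjs_odd a : Eodd (Pjs a).
Proof.
rewrite /Pjs; case: (boolP (a.+1 \in js)) => [/mem_js_range/P_odd // | _].
exact: Eodd0.
Qed.

Lemma Pjs_avoid a : Eavoid N (Pjs a).
Proof.
rewrite /Pjs; case: (boolP (a.+1 \in js)) => [/mem_js_range/P_avoid // | _] A.
by rewrite msupp0 inE.
Qed.

Lemma Pjs_ge a : (N <= a)%N -> Pjs a = 0.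
Proof.
move=> Na; rewrite /Pjs; case: (boolP (a.+1 \in js)) => // /mem_js_range/andP[_].
by rewrite ltnNge Na.
Qed.

Lemma alg_hom_fix_Pjs f a : alg_hom f ->
  (forall b, (N <= b)%N -> f 'e[b] = 'e[b]) -> f (Pjs a) = Pjs a.
Proof. by move=> fH f_fix; apply: alg_hom_fix_avoid fH f_fix (@Pjs_avoid a). Qed.

Definition conj_aut : E -> E := subst (fun a => 'e[pi a] + Pjs a).

Definition conj_aut_inv : E -> E := subst (fun b => 'e[pi_inv b] - Pjs (pi_inv b)).

Lemma conj_aut_gen a : conj_aut 'e[a] = 'e[pi a] + Pjs a.
Proof. exact: subst_gen. Qed.

Lemma conj_aut_inv_gen b : conj_aut_inv 'e[b] = 'e[pi_inv b] - Pjs (pi_inv b).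
Proof. exact: subst_gen. Qed.

Lemma conj_image_odd a : Eodd ('e[pi a] + Pjs a).
Proof. by apply: EoddD; [apply: Eodd_gen | apply: Pjs_odd]. Qed.

Lemma conj_inv_image_odd b : Eodd ('e[pi_inv b] - Pjs (pi_inv b)).
Proof. by apply: EoddD; [apply: Eodd_gen | apply/EoddN/Pjs_odd]. Qed.

Lemma conj_aut_alg_hom : alg_hom conj_aut.
Proof. exact: (subst_alg_hom two_nz conj_image_odd). Qed.

Lemma conj_aut_inv_alg_hom : alg_hom conj_aut_inv.
Proof. exact: (subst_alg_hom two_nz conj_inv_image_odd). Qed.

Lemma conj_aut_Pjs a : conj_aut (Pjs a) = Pjs a.
Proof.
apply: alg_hom_fix_Pjs conj_aut_alg_hom _ => b Nb.
by rewrite conj_aut_gen relabel_ge // Pjs_ge // addr0.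
Qed.

Lemma conj_aut_inv_Pjs a : conj_aut_inv (Pjs a) = Pjs a.
Proof.
apply: alg_hom_fix_Pjs conj_aut_inv_alg_hom _ => b Nb.
by rewrite conj_aut_inv_gen /unrelabel ltnNge Nb /= Pjs_ge // subr0.
Qed.

Lemma conj_aut_aut : alg_aut conj_aut.
Proof.
have [conj_lin _ _] := conj_aut_alg_hom; have [inv_lin _ _] := conj_aut_inv_alg_hom.
apply: (subst_alg_aut two_nz conj_image_odd conj_inv_image_odd) => [b | a].
- rewrite -/conj_aut (linB conj_lin) conj_aut_Pjs conj_aut_gen.
  by rewrite (unrelabelK pred_js_uniq pred_js_lt) addrK.
- rewrite -/conj_aut_inv (linD inv_lin) conj_aut_inv_Pjs conj_aut_inv_gen.
  by rewrite (relabelK pred_js_uniq pred_js_lt) subrK.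
Qed.

Lemma sign_aut_Pjs a : sign_aut s (Pjs a) = Pjs a.
Proof.
have sN : (s <= N)%N by have := size_relabel_le pred_js_uniq pred_js_lt; rewrite size_map.
apply: alg_hom_fix_Pjs (sign_aut_alg_hom two_nz s) _ => b Nb.
by rewrite sign_aut_gen ltnNge (leq_trans sN Nb).
Qed.

Lemma conj_aut_prodT : forall x, conj_aut (prodT T js x) = sign_aut s (conj_aut x).
Proof.
have prodT_tri := tri_aut_prodT T_aut T_fix T_gen P_avoid js_uniq js_range.
have [conj_lin _ _] := conj_aut_alg_hom; have [sign_lin _ _] := sign_aut_alg_hom two_nz s.
apply: alg_hom_eq_gen (alg_hom_comp conj_aut_alg_hom (tri_aut_hom prodT_tri))
  (alg_hom_comp (sign_aut_alg_hom two_nz s) conj_aut_alg_hom) _ => a /=.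
case: prodT_tri => _ ->; rewrite conj_aut_gen (linD sign_lin) sign_aut_Pjs sign_aut_gen /tri_image.
have [ajs | ajs] := boolP (a.+1 \in js); last first.
  by rewrite andbF conj_aut_gen ltnNge (relabel_js_ge ajs) /Pjs (negbTE ajs).
have aN : (a < N)%N by apply: pred_js_lt; rewrite mem_pred_js.
rewrite andbT aN (relabel_js_lt ajs) /= (linD conj_lin) (linN conj_lin) (linZ conj_lin).
have -> : P a.+1 = Pjs a by rewrite /Pjs ajs.
by rewrite conj_aut_gen conj_aut_Pjs scaler_nat mulr2n opprD -addrA addKr.
Qed.

Lemma prodT_grading_iso : Z2iso (grading_of (prodT T js)) (grading_star s).
Proof.
have [psi [psi_aut psi_grading]] := Z2iso_conj conj_aut_aut conj_aut_prodT.
exists psi; split=> // b x; apply: iff_trans (psi_grading b x) _.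
exact: grading_of_sign.
Qed.

End Conjugation.

Unset Implicit Arguments.

Theorem mainTheorem7 (F : fieldType) (charF0 : [pchar F] =i pred0)
  (N : nat) (T : nat -> Grass F -> Grass F) (P : nat -> Grass F)
  (hT_aut : forall j, (0 < j <= N)%N -> alg_aut (T j))
  (hT_fix : forall j i, (0 < j <= N)%N -> (0 < i)%N -> i != j ->
              T j (egen F i) = egen F i)
  (hT_n : forall j, (0 < j <= N)%N -> T j (egen F j) = - egen F j + 2%:R *: P j)
  (hP_tri : forall j, (0 < j <= N)%N -> Eavoid j (P j) /\ Eodd (P j))
  (hP_N : forall j, (0 < j <= N)%N -> Eavoid N (P j) /\ Eodd (P j)) :
  (* (1) abelian *)
  (forall f g, in_gen T N f -> in_gen T N g -> f \o g =1 g \o f) /\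
  (* (2) order 2^N *)
  (exists h : 'I_(2 ^ N) -> (Grass F -> Grass F),
      (forall i, in_gen T N (h i)) /\
      (forall i k, h i =1 h k -> i = k) /\
      (forall f, in_gen T N f -> exists i, f =1 h i)) /\
  (* (3) involutions, inducing Z2-gradings *)
  (forall phi, in_gen T N phi ->
      phi \o phi =1 id /\ Z2grading (grading_of phi)) /\
  (* (4) *)
  (forall js : seq nat, uniq js -> all (fun j => 0 < j <= N)%N js ->
      Z2iso (grading_of (foldr (fun j f => T j \o f) id js))
            (grading_star (F:=F) (size js))).
Proof.
have two_nz : (2%:R : F) != 0 by move/pcharf0P: charF0 => ->.
have P_avoid j (Tj : (0 < j <= N)%N) := (hP_N j Tj).1.
have P_odd j (Tj : (0 < j <= N)%N) := (hP_N j Tj).2.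
split; first exact: in_gen_comm hT_aut hT_fix hT_n P_avoid.
split; first exact: in_gen_card hT_aut hT_fix hT_n P_avoid two_nz.
split; last first.
  move=> js js_uniq js_range.
  exact: (prodT_grading_iso two_nz hT_aut hT_fix hT_n P_avoid P_odd js_uniq js_range).
move=> phi phiG; have phiK := in_gen_involutive hT_aut hT_fix hT_n P_avoid phiG.
split; first exact: phiK.
exact: (grading_of_involution two_nz (in_gen_alg_hom hT_aut hT_fix hT_n P_avoid phiG) phiK).
Qed.
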